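(* For every integer $b\ge0$, let $\mathcal{P}(b)$ be the set of unordered partitions of $b$ and for $q\in\mathcal{P}(b)$ let $o(q)$ be the number of parts of $q$ equal to $1$. Then \[ \operatorname{trace}(A_b)=\sum_{q\in\mathcal{P}(b)}2^{o(q)}. \]
   Context: For an integer $b\ge 0$, an ordered partition of $b$ is a finite sequence $(q_1,\ldots,q_k)$ of positive integers summing to $b$ (for $b=0$ the only one is the empty sequence). An ordered partition $(q_1,\ldots,q_k)$ with $k\ge1$ is nontrivially embedded into an ordered partition $(r_1,\ldots,r_\ell)$ by a choice of indices $1\le i_2<\cdots<i_k\le \ell$ with $q_j\le r_{i_j}$ for $2\le j\le k$; different index tuples count as different embeddings. A card for $b$ balls is either (i) a trivial card, given by an ordered partition $q$ of $b$, with left and right partitions both $q$; or (ii) a throw card, given by ordered partitions $q$ ($k\ge1$ parts) and $r$ of $b$ together with a nontrivial embedding of $q$ into $r$, with left partition $q$ and right partition $r$. Different index tuples give different cards, and a throw card is distinct from the trivial card even when $q=r$. $A_b$ is the square matrix with rows and columns indexed by the ordered partitions of $b$ whose $(u,v)$ entry is the number of cards for $b$ balls with left partition $u$ and right partition $v$. *)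

From mathcomp Require Import all_boot.
Set Implicit Arguments. Unset Strict Implicit. Unset Printing Implicit Defensive.

Definition is_opart (b : nat) (s : seq nat) : bool :=
  all (fun x => 0 < x) s && (sumn s == b).

(* An unordered partition of b, represented canonically as a nonincreasing
   sequence of positive integers summing to b. *)
Definition is_upart (b : nat) (s : seq nat) : bool :=
  sorted geq s && all (fun x => 0 < x) s && (sumn s == b).

Definition ones (q : seq nat) : nat := count_mem 1 q.

(* Number of nontrivial embeddings of q = (q_1,...,q_k) into r = (r_1,...,r_l):
   index tuples 1 <= i_2 < ... < i_k <= l with q_j <= r_{i_j} (2 <= j <= k).
   A strictly increasing index tuple is encoded by the bit mask m of length l
   selecting the positions {i_2,...,i_k}; the condition is that the selected
   entries (mask m r) have the same length as (q_2,...,q_k) and dominate it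
   pointwise. *)
Definition nemb (q r : seq nat) : nat :=
  if q is _ :: s then
    #|[set m : (size r).-tuple bool | all2 leq s (mask m r)]|
  else 0.

(* Entry (u,v) of A_b: number of cards for b balls with left partition u and
   right partition v (one trivial card if u = v, plus one throw card per
   nontrivial embedding of u into v). *)
Definition A_entry (b : nat) (u v : seq nat) : nat :=
  (is_opart b u && is_opart b v) * ((u == v) + nemb u v).

From mathcomp Require Import all_boot zify.
Set Implicit Arguments. Unset Strict Implicit. Unset Printing Implicit Defensive.

(* A self-embedding of u = (u_1, ..., u_k) selects k - 1 of the k positions, so
   it omits exactly one position p, and it is valid iff u_1 >= ... >= u_p.
   Hence A_b(u, u) is the number of nonincreasing prefixes of u, the empty one
   included.  Splitting compositions of b by their last part then gives
   trace(A_b) = sum_(k < b) trace(A_k) + p(b), with p the partition function.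
   The weight W(b) = sum_q 2^o(q) obeys the same recursion: removing a part 1
   shows W(b+1) = 2 W(b) + p'(b+1) and p(b+1) = p(b) + p'(b+1), where p'
   counts the partitions without parts 1. *)

Lemma card_tuple_bool_cons n (p : pred (seq bool)) :
  #|[set m : n.+1.-tuple bool | p m]| =
  #|[set m : n.-tuple bool | p (false :: m)]| + #|[set m : n.-tuple bool | p (true :: m)]|.
Proof.
rewrite -!sum1dep_card.
pose f (bt : bool * n.-tuple bool) := [tuple of bt.1 :: bt.2].
have f_bij : bijective f.
  exists (fun t : n.+1.-tuple bool => (thead t, [tuple of behead t])).
    by case=> c t; congr pair; apply: val_inj.
  by move=> t; rewrite [RHS]tuple_eta.
rewrite (reindex f) /=; last exact: onW_bij.
rewrite -(pair_big_dep xpredT (fun (c : bool) (t : n.-tuple bool) => p (c :: t))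
                       (fun _ _ => 1)) /=.
by rewrite big_bool addnC.
Qed.

Definition dominating_masks (s r : seq nat) : nat :=
  #|[set m : (size r).-tuple bool | all2 leq s (mask m r)]|.

Lemma nemb_cons x s r : nemb (x :: s) r = dominating_masks s r.
Proof. by []. Qed.

Lemma dominating_masks0 : dominating_masks [::] [::] = 1.
Proof.
rewrite /dominating_masks (eq_card (B := predT)) => [|m]; last by rewrite !inE mask0.
by rewrite card_tuple card_bool.
Qed.

Lemma dominating_masks_cons s y r :
  dominating_masks s (y :: r) =
  dominating_masks s r + (if s is x :: s' then (x <= y) * dominating_masks s' r else 0).
Proof.
pose p m := all2 leq s (mask m (y :: r)).
rewrite /dominating_masks (card_tuple_bool_cons (size r) p) {}/p /=; congr (_ + _).
have card_false n : #|[set m : n.-tuple bool | false]| = 0.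
  by apply/eqP; rewrite cards_eq0; apply/eqP/setP => m; rewrite !inE.
case: s => [|x s] /=; first exact: card_false.
by case: (x <= y); rewrite ?mul1n ?mul0n /= ?card_false.
Qed.

Lemma dominating_masks_gt s r : size r < size s -> dominating_masks s r = 0.
Proof.
move=> lt_rs; apply/eqP; rewrite cards_eq0; apply/eqP/setP => m; rewrite !inE.
apply/negbTE/negP; rewrite all2E => /andP[/eqP eq_size _].
by move: lt_rs; rewrite eq_size ltnNge size_subseq ?mask_subseq.
Qed.

Lemma dominating_masks_refl s : dominating_masks s s = 1.
Proof.
elim: s => [|x s IHs]; first exact: dominating_masks0.
by rewrite dominating_masks_cons dominating_masks_gt // leqnn IHs.
Qed.

Fixpoint nonincr_prefix_len (u : seq nat) : nat :=
  if u is x :: s then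
    (if s is y :: _ then (y <= x) * nonincr_prefix_len s else 0).+1
  else 0.

Lemma nemb_self u : nemb u u = nonincr_prefix_len u.
Proof.
case: u => // x s; rewrite nemb_cons.
elim: s x => [|y s IHs] x; first by rewrite dominating_masks_cons dominating_masks0.
by rewrite dominating_masks_cons dominating_masks_refl IHs.
Qed.

Lemma nonincr_prefix_len_rcons v y :
  nonincr_prefix_len (rcons v y) = nonincr_prefix_len v + sorted geq (rcons v y).
Proof.
elim: v => // x v IHv.
rewrite rcons_cons /= IHv; case: v {IHv} => [|z v] /=.
  by case: (y <= x).
by case: (z <= x); rewrite ?mul1n ?mul0n ?addSn.
Qed.

Lemma opart0 s : is_opart 0 s = (s == [::]).
Proof. by case: s => // -[|x] s; rewrite /is_opart //= addSn andbF. Qed.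

Lemma opart_rcons b v y :
  is_opart b (rcons v y) = [&& 0 < y, y <= b & is_opart (b - y) v].
Proof.
rewrite /is_opart -cats1 all_cat sumn_cat /= andbT addn0.
case: (0 < y); rewrite ?andbF //=; case: (all _ v); rewrite ?andbF //=.
by apply/eqP/andP => [<-|[le_yb /eqP ->]]; rewrite ?leq_addl ?addnK ?subnK.
Qed.

Lemma size_opart b s : is_opart b s -> size s <= b.
Proof.
case/andP=> pos_s /eqP <-{b}; elim: s pos_s => //= x s IHs /andP[x_gt0 /IHs].
by rewrite -addn1 addnC; apply: leq_add.
Qed.

Fixpoint compositions (n b : nat) : seq (seq nat) :=
  if b is _.+1 then
    if n is n'.+1 then [seq rcons v (b - k) | k <- iota 0 b, v <- compositions n' k]
    else [::]
  else [:: [::]].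

Lemma compositionsS n b :
  compositions n.+1 b.+1 =
  [seq rcons v (b.+1 - k) | k <- iota 0 b.+1, v <- compositions n k].
Proof. by []. Qed.

Lemma mem_compositions n b s :
  (s \in compositions n b) = is_opart b s && (size s <= n).
Proof.
elim: n b s => [|n IHn] [|b] s;
  try by rewrite ?inE ?opart0; case: s => [|? ?]; rewrite /= ?andbF.
rewrite compositionsS; apply/allpairsPdep/idP => [[k [v [lt_kb v_k ->]]]|].
  rewrite mem_iota in lt_kb; rewrite IHn in v_k.
  rewrite opart_rcons size_rcons ltnS subKn; last by lia.
  by case/andP: v_k => -> ->; rewrite !andbT; apply/andP; split; lia.
case/lastP: s => [|v y] //; rewrite opart_rcons size_rcons ltnS.
case/andP=> /and3P[y_gt0 le_yb v_opart] le_vn.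
exists (b.+1 - y), v; rewrite mem_iota IHn v_opart le_vn subKn //.
by split => //; lia.
Qed.

Lemma uniq_compositions n b : uniq (compositions n b).
Proof.
elim: n b => [|n IHn] [|b] //; rewrite compositionsS.
apply: allpairs_uniq_dep => [|k _|]; [exact: iota_uniq | exact: IHn |].
move=> [k1 v1] [k2 v2] /allpairsPdep[k1' [_ [+ _ [ek1 _]]]]
  /allpairsPdep[k2' [_ [+ _ [ek2 _]]]].
rewrite -ek1 -ek2 !mem_iota => lt_k1 lt_k2 /= /rcons_inj[-> eq_last].
by have -> : k1 = k2 by lia.
Qed.

Lemma mem_compositions_self b s : (s \in compositions b b) = is_opart b s.
Proof. by rewrite mem_compositions andb_idr //; apply: size_opart. Qed.

Lemma sum_compositions_last (F : seq nat -> nat) b :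
  \sum_(u <- compositions b.+1 b.+1) F u =
  \sum_(k < b.+1) \sum_(v <- compositions k k) F (rcons v (b.+1 - k)).
Proof.
rewrite compositionsS big_allpairs_dep.
rewrite -{1}(subn0 b.+1) -/(index_iota 0 b.+1) big_mkord.
apply: eq_bigr => k _; apply: perm_big; apply: uniq_perm; rewrite ?uniq_compositions //.
move=> v; rewrite mem_compositions mem_compositions_self andb_idr // => /size_opart.
by move/leq_trans; apply; rewrite -ltnS.
Qed.

Lemma sorted_geq_rcons v y : sorted geq (rcons v y) = sorted geq v && all (leq y) v.
Proof.
rewrite -rev_sorted rev_rcons /= path_sortedE ?all_rev ?rev_sorted 1?andbC //.
exact: leq_trans.
Qed.

Lemma A_entry_diag b u : is_opart b u -> A_entry b u u = (nonincr_prefix_len u).+1.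
Proof. by rewrite /A_entry => ->; rewrite eqxx nemb_self /= mul1n add1n. Qed.

Definition trace_A (b : nat) : nat :=
  \sum_(u <- compositions b b) (nonincr_prefix_len u).+1.

Definition partition_count (b : nat) : nat :=
  \sum_(q <- compositions b b | sorted geq q) 1.

Definition partition_weight (b : nat) : nat :=
  \sum_(q <- compositions b b | sorted geq q) 2 ^ ones q.

Lemma trace_A_rec b : trace_A b = \sum_(k < b) trace_A k + partition_count b.
Proof.
case: b => [|b].
  by rewrite big_ord0 /trace_A /partition_count /= !big_cons !big_nil.
rewrite /trace_A /partition_count [X in _ + X]big_mkcond.
rewrite !sum_compositions_last -big_split.
apply: eq_bigr => k _; rewrite -big_split; apply: eq_bigr => v _.
by rewrite nonincr_prefix_len_rcons -addSn; case: sorted.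
Qed.

Lemma sum_partitions_succ (F : seq nat -> nat) b :
  \sum_(q <- compositions b.+1 b.+1 | sorted geq q) F q =
  \sum_(q <- compositions b b | sorted geq q) F (rcons q 1) +
  \sum_(q <- compositions b.+1 b.+1 | sorted geq q && (1 \notin q)) F q.
Proof.
rewrite (bigID (fun q => 1 \in q)); congr (_ + _).
rewrite -big_filter -[RHS]big_filter -(big_map (rcons^~ 1) xpredT F).
apply: perm_big; apply: uniq_perm.
- exact: filter_uniq (uniq_compositions _ _).
- by rewrite map_inj_uniq ?filter_uniq ?uniq_compositions //; apply: rcons_injl.
move=> q; rewrite mem_filter mem_compositions_self; apply/idP/mapP.
  case/lastP: q => [|v y]; first by rewrite andbF.
  rewrite sorted_geq_rcons opart_rcons mem_rcons inE.
  case/andP=> /andP[/andP[sorted_v ge_y] one_in] /and3P[y_gt0 _ opart_v].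
  have le_y1 : y <= 1 by case/orP: one_in => [/eqP <- | /(allP ge_y)].
  have y1 : y = 1 by lia.
  rewrite y1 subn1 in opart_v.
  by exists v; rewrite ?y1 // mem_filter sorted_v mem_compositions_self.
case=> v; rewrite mem_filter mem_compositions_self => /andP[sorted_v opart_v] ->.
rewrite sorted_geq_rcons sorted_v opart_rcons subn1 opart_v mem_rcons mem_head !andbT /=.
by case/andP: opart_v.
Qed.

Lemma partition_weight_succ b :
  partition_weight b.+1 + partition_count b = 2 * partition_weight b + partition_count b.+1.
Proof.
rewrite /partition_weight /partition_count !sum_partitions_succ.
have ones_rcons1 q : 2 ^ ones (rcons q 1) = 2 * 2 ^ ones q.
  by rewrite /ones -cats1 count_cat addn1 expnS.
rewrite (eq_bigr _ (fun q _ => ones_rcons1 q)) -big_distrr.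
rewrite [X in _ + X + _](eq_bigr (fun=> 1)) => [|q /andP[_ /count_memPn]];
  last by rewrite /ones => ->.
by rewrite -addnA (addnC (\sum_(q <- compositions b.+1 b.+1 | _) 1)).
Qed.

Lemma partition_weight_rec b :
  partition_weight b = \sum_(k < b) partition_weight k + partition_count b.
Proof.
elim: b => [|b IHb].
  by rewrite big_ord0 /partition_weight /partition_count /= !big_cons !big_nil.
apply/(@addIn (partition_count b)); rewrite partition_weight_succ big_ord_recr /= IHb.
set S := \sum_(k < b) _; lia.
Qed.

Lemma eq_partial_sum_rec (F G c : nat -> nat) :
  (forall b, F b = \sum_(k < b) F k + c b) ->
  (forall b, G b = \sum_(k < b) G k + c b) -> F =1 G.
Proof.
move=> F_rec G_rec; elim/ltn_ind=> b IHb; rewrite F_rec G_rec; congr (_ + _).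
by apply: eq_bigr => k _; apply: IHb.
Qed.

Theorem theorem11 (b : nat) (P Q : seq (seq nat)) :
  uniq P -> (forall s, (s \in P) = is_opart b s) ->
  uniq Q -> (forall s, (s \in Q) = is_upart b s) ->
  \sum_(u <- P) A_entry b u u = \sum_(q <- Q) 2 ^ ones q.
Proof.
move=> uniq_P mem_P uniq_Q mem_Q.
have -> : \sum_(u <- P) A_entry b u u = trace_A b.
  rewrite (eq_big_seq (fun u => (nonincr_prefix_len u).+1)) => [|u]; last first.
    by rewrite mem_P; apply: A_entry_diag.
  apply/perm_big/uniq_perm; rewrite ?uniq_compositions // => u.
  by rewrite mem_P mem_compositions_self.
rewrite (eq_partial_sum_rec trace_A_rec partition_weight_rec b) /partition_weight -big_filter.
apply/perm_big/uniq_perm; rewrite ?filter_uniq ?uniq_compositions // => q.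
by rewrite mem_Q mem_filter mem_compositions_self /is_upart /is_opart andbA.
Qed.
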